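(* Let $K$ be a nonempty finite set and $X=\Delta(K)$. 1. For each finite set $S$, the posterior mapping $\psi_S$ is $1$-Lipschitz from $(\Delta(K\times S),\|\cdot\|_1)$ to $(\Delta_f(X),d_* )$. 2. For all $u,v\in\Delta_f(X)$, $$d_*(u,v)=\inf\{\|\pi-\pi'\|_1:\ S\text{ finite},\ \pi,\pi'\in\Delta(K\times S),\ \psi_S(\pi)=u,\ \psi_S(\pi')=v\}.$$
   Context: $\Delta_f(X)$ is the set of finitely supported probabilities on $X=\Delta(K)$. For $\pi\in\Delta(K\times S)$, $\|\pi\|_1=\sum_{k,s}|\pi(k,s)|$. For a finite set $S$, $\psi_S:\Delta(K\times S)\to\Delta_f(X)$ is defined by $\psi_S(\pi)=\sum_{s\in S}\pi(s)\delta_{p(s)}$, where: - $\pi(s)=\sum_k\pi(k,s)$, and - $p(s)\in X$ is given by $p^k(s)=\pi(k,s)/\pi(s)$ (arbitrary if $\pi(s)=0$). $D_1=\{f\in\mathcal C(X):\ \forall x,y\in X,\ \forall a,b\ge0,\ af(x)-bf(y)\le\|ax-by\|_1\}$, and $d_*(u,v)=\sup_{f\in D_1}\big(u(f)-v(f)\big)$ with $u(f)=\sum_xu(x)f(x)$. *)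

From Stdlib Require Import Reals List ClassicalEpsilon.
From mathcomp Require Import all_boot.

Set Implicit Arguments.
Unset Strict Implicit.
Unset Printing Implicit Defensive.

Local Open Scope R_scope.

Definition rsum (T : finType) (F : T -> R) : R := \big[Rplus/R0]_(t : T) F t.

Definition lsum (A : Type) (F : A -> R) (l : list A) : R :=
  fold_right (fun a r => F a + r) 0 l.

Definition Pt (K : finType) := K -> R.

Definition l1 (T : finType) (x : T -> R) : R := rsum (fun t => Rabs (x t)).

Definition inX (K : finType) (x : Pt K) : Prop :=
  (forall k, 0 <= x k) /\ rsum x = 1.

Definition inDelta (T : finType) (pi : T -> R) : Prop :=
  (forall t, 0 <= pi t) /\ rsum pi = 1.

(* Delta_f(X): finitely supported probabilities on X, given by their mass
   function u : Pt K -> R. *)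
Definition is_fsprob (K : finType) (u : Pt K -> R) : Prop :=
  (forall x, 0 <= u x) /\
  (forall x, u x <> 0 -> inX x) /\
  exists l : list (Pt K), NoDup l /\ (forall x, u x <> 0 -> In x l) /\
                          lsum u l = 1.

Definition fsupp (K : finType) (u : Pt K -> R) : list (Pt K) :=
  epsilon (inhabits nil)
    (fun l => NoDup l /\ forall x, u x <> 0 -> In x l).

Definition integ (K : finType) (u : Pt K -> R) (f : Pt K -> R) : R :=
  lsum (fun x => u x * f x) (fsupp u).

Definition contX (K : finType) (f : Pt K -> R) : Prop :=
  forall x, inX x -> forall eps, 0 < eps ->
    exists delta, 0 < delta /\
      forall y, inX y -> l1 (fun k => x k - y k) < delta ->
        Rabs (f x - f y) < eps.

Definition D1 (K : finType) (f : Pt K -> R) : Prop :=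
  contX f /\
  forall x y, inX x -> inX y -> forall a b, 0 <= a -> 0 <= b ->
    a * f x - b * f y <= l1 (fun k => a * x k - b * y k).

Definition dstar_set (K : finType) (u v : Pt K -> R) : R -> Prop :=
  fun r => exists f, D1 f /\ r = integ u f - integ v f.

Definition dstar (K : finType) (u v : Pt K -> R) : R :=
  epsilon (inhabits 0) (fun r => is_lub (dstar_set u v) r).

Definition is_glb (E : R -> Prop) (m : R) : Prop :=
  (forall r, E r -> m <= r) /\ (forall m', (forall r, E r -> m' <= r) -> m' <= m).

Definition marg (K S : finType) (pi : K * S -> R) (s : S) : R :=
  rsum (fun k => pi (k, s)).

(* p(s): posterior; p^k(s) = pi(k,s)/pi(s) (irrelevant when pi(s) = 0) *)
Definition post (K S : finType) (pi : K * S -> R) (s : S) : Pt K :=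
  fun k => pi (k, s) / marg pi s.

(* psi_S(pi) = sum_s pi(s) delta_{p(s)}, as a mass function on points *)
Definition psi (K S : finType) (pi : K * S -> R) : Pt K -> R :=
  fun x => rsum (fun s => if excluded_middle_informative (post pi s = x)
                          then marg pi s else 0).

From HB Require Import structures.
From Stdlib Require Import Reals Lra Classical List Permutation ClassicalEpsilon.
From Stdlib Require Import FunctionalExtensionality.
From mathcomp Require Import all_boot.

(* Part 1.  For [u = psi(pi)], [u(f) = sum_s pi(s) f(p(s))].  For [f] in
   [D1], the defining inequality with [a = pi(s)], [b = pi'(s)], [x = p(s)],
   [y = p'(s)] bounds the [s]-th term of [u(f) - v(f)] by
   [sum_k |pi(k,s) - pi'(k,s)|]; summing over [s] gives the bound on [d_*].

   Part 2.  Part 1 makes [d_*(u, v)] a lower bound.  For the converse, fix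
   [cc > d_*(u, v)], enumerate the supports [x_i] of [u] and [y_j] of [v],
   and consider the transport program in the unknowns [a_ij, b_ij, t_ijk]:
   [a, b >= 0], [sum_j a_ij = u(x_i)], [sum_i b_ij = v(y_j)],
   [|a_ij x_i^k - b_ij y_j^k| <= t_ijk], [sum t_ijk <= cc].
   A solution gives laws on the signal space [I x J] inducing [u] and [v] at
   distance at most [cc].  By Farkas' lemma (proved below by Fourier-Motzkin
   elimination) an infeasible program has a certificate, whose normalised
   multipliers [c_ijk] in [[-1, 1]] define [f = max_i min_j <c_ij, .>] in
   [D1] with [u(f) - v(f) > cc], which is impossible. *)

Set Implicit Arguments.
Unset Strict Implicit.
Local Open Scope R_scope.

HB.instance Definition _ := Monoid.isComLaw.Build R R0 Rplus
  (fun a b c => esym (Rplus_assoc a b c)) Rplus_comm Rplus_0_l.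

(** * Finite sums *)

Lemma rsum_ext (T : finType) (F G : T -> R) :
  (forall t, F t = G t) -> rsum F = rsum G.
Proof. by move=> H; rewrite /rsum; apply: eq_bigr => t _; apply: H. Qed.

Lemma rsum_zero (T : finType) (F : T -> R) : (forall t, F t = 0) -> rsum F = 0.
Proof. by move=> H; rewrite /rsum; apply: big1 => t _; apply: H. Qed.

Lemma rsum_add (T : finType) (F G : T -> R) :
  rsum (fun t => F t + G t) = rsum F + rsum G.
Proof. by rewrite /rsum big_split. Qed.

Lemma rsum_scal (T : finType) (c : R) (F : T -> R) :
  rsum (fun t => c * F t) = c * rsum F.
Proof.
rewrite /rsum; symmetry; apply: (big_morph (fun x => c * x)) => [x y|]; ring.
Qed.

Lemma rsum_opp (T : finType) (F : T -> R) : rsum (fun t => - F t) = - rsum F.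
Proof.
have -> : - rsum F = -1 * rsum F by ring.
by rewrite -rsum_scal; apply: rsum_ext => t; ring.
Qed.

Lemma rsum_sub (T : finType) (F G : T -> R) :
  rsum F - rsum G = rsum (fun t => F t - G t).
Proof. by rewrite /Rminus -rsum_opp -rsum_add. Qed.

Lemma rsum_le (T : finType) (F G : T -> R) :
  (forall t, F t <= G t) -> rsum F <= rsum G.
Proof.
move=> H; rewrite /rsum.
by apply: (big_ind2 (fun a b => a <= b)) => // [|*]; lra.
Qed.

Lemma rsum_nonneg (T : finType) (F : T -> R) : (forall t, 0 <= F t) -> 0 <= rsum F.
Proof.
move=> H; rewrite -(@rsum_zero T (fun _ => 0)) //; exact: rsum_le.
Qed.

Lemma rsum_abs (T : finType) (F : T -> R) :
  Rabs (rsum F) <= rsum (fun t => Rabs (F t)).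
Proof.
rewrite /rsum; apply: (big_ind2 (fun a b => Rabs a <= b)) => [|a b c d H1 H2|*].
- rewrite Rabs_R0; lra.
- apply: Rle_trans; [apply: Rabs_triang | lra].
- lra.
Qed.

Lemma rsum_ge_term (T : finType) (F : T -> R) t0 :
  (forall t, 0 <= F t) -> F t0 <= rsum F.
Proof.
move=> H; rewrite /rsum (bigD1 t0) //=.
have : 0 <= \big[Rplus/R0]_(i | i != t0) F i.
  by apply: (big_ind (fun x => 0 <= x)) => // [|*]; lra.
lra.
Qed.

Lemma rsum_delta (T : finType) (t0 : T) (F : T -> R) :
  rsum (fun t => if t == t0 then F t else 0) = F t0.
Proof.
by rewrite /rsum (bigD1 t0) //= eqxx big1 ?Rplus_0_r // => t /negbTE ->.
Qed.

Lemma rsum_delta_mul (T : finType) (t0 : T) (a : R) (G : T -> R) :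
  rsum (fun t => (if t == t0 then a else 0) * G t) = a * G t0.
Proof.
rewrite -(rsum_delta t0 (fun t => a * G t)).
by apply: rsum_ext => t; case: (t == t0); ring.
Qed.

Lemma rsum_single (T : finType) (t0 : T) (G : T -> R) :
  (forall t, t != t0 -> G t = 0) -> rsum G = G t0.
Proof.
move=> H; rewrite -(rsum_delta t0 G); apply: rsum_ext => t.
by case E: (t == t0) => //; apply: H; rewrite E.
Qed.
Arguments rsum_single [T] t0 [G].

Lemma rsum_pair (T1 T2 : finType) (F : T1 * T2 -> R) :
  rsum F = rsum (fun a => rsum (fun b => F (a, b))).
Proof. by rewrite /rsum pair_bigA; apply: eq_bigr => -[a b] _. Qed.

Lemma rsum_swap (T1 T2 : finType) (F : T1 -> T2 -> R) :
  rsum (fun a => rsum (fun b => F a b)) = rsum (fun b => rsum (fun a => F a b)).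
Proof. by rewrite /rsum exchange_big. Qed.

Lemma rsum_sum (T1 T2 : finType) (F : T1 + T2 -> R) :
  rsum F = rsum (fun a => F (inl a)) + rsum (fun b => F (inr b)).
Proof. by rewrite /rsum big_sumType. Qed.

Lemma rsum_bool (F : bool -> R) : rsum F = F true + F false.
Proof. by rewrite /rsum (bigD1 true) //= (bigD1 false) //= big1 ?Rplus_0_r //; case. Qed.

Lemma rsum_unit (F : unit -> R) : rsum F = F tt.
Proof. by apply: rsum_single; case. Qed.

Lemma lsum_ext (A : Type) (F G : A -> R) l :
  (forall x, F x = G x) -> lsum F l = lsum G l.
Proof. by move=> H; elim: l => //= a l ->; rewrite H. Qed.

Lemma lsum_le (A : Type) (F G : A -> R) l :
  (forall x, F x <= G x) -> lsum F l <= lsum G l.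
Proof. by move=> H; elim: l => [|a l IH] /=; [lra | have := H a; lra]. Qed.

Lemma lsum_opp (A : Type) (F : A -> R) l : lsum (fun x => - F x) l = - lsum F l.
Proof. by elim: l => [|a l IH] /=; [ring | rewrite IH; ring]. Qed.

Lemma lsum_rsum (A : Type) (T : finType) (G : A -> T -> R) l :
  lsum (fun x => rsum (G x)) l = rsum (fun t => lsum (fun x => G x t) l).
Proof.
elim: l => [|a l IH] /=; first by rewrite rsum_zero.
by rewrite IH rsum_add.
Qed.

Lemma lsum_indicator (A : Type) (y : A) (c : R) l : NoDup l ->
  lsum (fun x => if excluded_middle_informative (y = x) then c else 0) l =
  if excluded_middle_informative (In y l) then c else 0.
Proof.
elim: l => [|a l IH] /= N; first by case: excluded_middle_informative.
inversion N as [|a0 l0 Ha Hl]; subst; rewrite IH //.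
case: (excluded_middle_informative (y = a)) => [E|E];
case: (excluded_middle_informative (In y l)) => G1;
case: (excluded_middle_informative (a = y \/ In y l)) => G2; subst; simpl;
  try tauto; try ring; exfalso; firstorder.
Qed.

Lemma lsum_ord (A : Type) (x0 : A) (F : A -> R) (l : list A) :
  lsum F l = rsum (fun i : 'I_(size l) => F (nth x0 l i)).
Proof.
have -> : lsum F l = \big[Rplus/R0]_(x <- l) F x.
  by elim: l => [|a l IH] /=; [rewrite big_nil | rewrite big_cons IH].
by rewrite (big_nth x0) big_mkord.
Qed.

Lemma lsum_perm (A : Type) (F : A -> R) (l1 l2 : list A) :
  Permutation l1 l2 -> lsum F l1 = lsum F l2.
Proof. by elim=> //= [x l l' _ -> | x y l | l l' l'' _ -> _ ->] //; ring. Qed.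

Definition nonzerob (A : Type) (g : A -> R) (x : A) : bool :=
  if excluded_middle_informative (g x = 0) then false else true.

Lemma nonzerobP (A : Type) (g : A -> R) x : nonzerob g x = true <-> g x <> 0.
Proof. by rewrite /nonzerob; case: excluded_middle_informative. Qed.

Lemma lsum_filter (A : Type) (g : A -> R) l :
  lsum g l = lsum g (List.filter (nonzerob g) l).
Proof.
elim: l => [|a l IH] //=; case E: (nonzerob g a) => /=; rewrite -IH //.
by move: E; rewrite /nonzerob; case: excluded_middle_informative => // H _; rewrite H; ring.
Qed.

Lemma lsum_indep (A : Type) (g : A -> R) l1 l2 : NoDup l1 -> NoDup l2 ->
  (forall x, g x <> 0 -> In x l1) -> (forall x, g x <> 0 -> In x l2) ->
  lsum g l1 = lsum g l2.
Proof.
move=> N1 N2 C1 C2; rewrite (lsum_filter g l1) (lsum_filter g l2).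
apply: lsum_perm; apply: NoDup_Permutation; try exact: NoDup_filter.
by move=> x; rewrite !filter_In !nonzerobP; split=> -[_ H]; split; auto.
Qed.

(** * Farkas' lemma, by Fourier-Motzkin elimination *)

Lemma bigmin_le (C : eqType) (r : seq C) (P : pred C) (U : C -> R) e p :
  p \in r -> P p -> \big[Rmin/e]_(i <- r | P i) U i <= U p.
Proof.
elim: r => [|a r IH] //=; rewrite big_cons in_cons => /orP [/eqP <- | Hin] Pp.
- by rewrite Pp; apply: Rmin_l.
- by case: (P a); [apply: Rle_trans (Rmin_r _ _) _ |]; apply: IH.
Qed.

Lemma bigmax_ge (C : eqType) (r : seq C) (P : pred C) (U : C -> R) e p :
  p \in r -> P p -> U p <= \big[Rmax/e]_(i <- r | P i) U i.
Proof.
elim: r => [|a r IH] //=; rewrite big_cons in_cons => /orP [/eqP <- | Hin] Pp.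
- by rewrite Pp; apply: Rmax_l.
- by case: (P a); [apply: Rle_trans _ (Rmax_r _ _) |]; apply: IH.
Qed.

Lemma separating_value (C : finType) (P Q : pred C) (L U : C -> R) :
  (forall q p, Q q -> P p -> L q <= U p) ->
  exists t, (forall q, Q q -> L q <= t) /\ (forall p, P p -> t <= U p).
Proof.
move=> H; pose m0 := \big[Rmin/0]_(p | P p) U p.
exists (\big[Rmax/m0]_(q | Q q) L q); split.
- by move=> q Qq; apply: bigmax_ge; rewrite ?mem_index_enum.
- move=> p Pp; apply: (big_ind (fun x => x <= U p)) => [||q Qq]; last exact: H.
  + by apply: bigmin_le; rewrite ?mem_index_enum.
  + by move=> x y; apply: Rmax_lub.
Qed.

Definition dotv (V : finType) (a x : V -> R) : R := rsum (fun w => a w * x w).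

Definition feasible (V C : finType) (A : C -> V -> R) (b : C -> R) : Prop :=
  exists x : V -> R, forall c, dotv (A c) x <= b c.

Definition certificate (V C : finType) (A : C -> V -> R) (b : C -> R) : Prop :=
  exists y : C -> R, (forall c, 0 <= y c) /\
    (forall w, rsum (fun c => y c * A c w) = 0) /\ rsum (fun c => y c * b c) < 0.

Lemma dotv_comb (V C : finType) (y : C -> R) (A : C -> V -> R) x :
  dotv (fun w => rsum (fun c => y c * A c w)) x = rsum (fun c => y c * dotv (A c) x).
Proof.
rewrite /dotv (@rsum_ext _ _ (fun w => rsum (fun c => x w * (y c * A c w)))).
  by rewrite rsum_swap; apply: rsum_ext => c; rewrite -rsum_scal; apply: rsum_ext => w; ring.
by move=> w; rewrite Rmult_comm rsum_scal.
Qed.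

Lemma dotv_update (V : finType) (a x : V -> R) v t :
  dotv a (fun w => if w == v then t else x w) = dotv a x + a v * (t - x v).
Proof.
rewrite /dotv (@rsum_ext _ _ (fun w => a w * x w +
  (if w == v then a v * (t - x v) else 0))).
  by rewrite rsum_add (rsum_delta v (fun _ => a v * (t - x v))).
by move=> w; case: eqP => [->|_]; ring.
Qed.

Definition is_pos (x : R) : bool := if Rlt_dec 0 x then true else false.
Definition is_neg (x : R) : bool := if Rlt_dec x 0 then true else false.
Definition is_zero (x : R) : bool := if Req_EM_T x 0 then true else false.

Lemma is_posP x : is_pos x = true <-> 0 < x.
Proof. by rewrite /is_pos; case: Rlt_dec. Qed.
Lemma is_negP x : is_neg x = true <-> x < 0.
Proof. by rewrite /is_neg; case: Rlt_dec. Qed.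
Lemma is_zeroP x : is_zero x = true <-> x = 0.
Proof. by rewrite /is_zero; case: Req_EM_T. Qed.

(* Fourier-Motzkin elimination of an unknown whose column is [a]: the new
   rows are the old rows with [a c = 0] and, for every pair [p, q] with
   [a p > 0 > a q], the combination [-a q * row p + a p * row q]; all other
   indices give the trivial row.  [fm_comb a c'] lists the multipliers. *)
Definition fm_comb (C : finType) (a : C -> R) (c' : C + C * C) (c : C) : R :=
  match c' with
  | inl c0 => if is_zero (a c0) then (if c == c0 then 1 else 0) else 0
  | inr (p, q) => if is_pos (a p) && is_neg (a q) then
       (if c == p then - a q else 0) + (if c == q then a p else 0) else 0
  end.

Definition fm_A (V C : finType) (a : C -> R) (A : C -> V -> R) c' w : R :=
  rsum (fun c => fm_comb a c' c * A c w).
Definition fm_b (C : finType) (a : C -> R) (b : C -> R) c' : R :=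
  rsum (fun c => fm_comb a c' c * b c).

Lemma fm_comb_nonneg (C : finType) (a : C -> R) c' c : 0 <= fm_comb a c' c.
Proof.
case: c' => [c0|[p q]] /=.
- by case: is_zero; [case: (c == c0)|]; lra.
- case E: (is_pos (a p)); case E2: (is_neg (a q)) => /=; try lra.
  by move/is_posP: E; move/is_negP: E2 => *; case: (c == p); case: (c == q); lra.
Qed.

Lemma fm_comb_kills (C : finType) (a : C -> R) c' :
  rsum (fun c => fm_comb a c' c * a c) = 0.
Proof.
case: c' => [c0|[p q]] /=.
- case E: (is_zero (a c0)); last by rewrite rsum_zero // => t; ring.
  by rewrite rsum_delta_mul; move/is_zeroP: E => ->; ring.
- case: (_ && _); last by rewrite rsum_zero // => t; ring.
  rewrite (@rsum_ext _ _ (fun t => (if t == p then - a q else 0) * a t +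
    (if t == q then a p else 0) * a t)); last by move=> t; ring.
  by rewrite rsum_add !rsum_delta_mul; ring.
Qed.

Lemma fm_zero_row (C : finType) (a F : C -> R) c0 : a c0 = 0 ->
  rsum (fun c => fm_comb a (inl c0) c * F c) = F c0.
Proof. by move/is_zeroP=> /= ->; rewrite rsum_delta_mul; ring. Qed.

Lemma fm_pair_row (C : finType) (a F : C -> R) p q : 0 < a p -> a q < 0 ->
  rsum (fun c => fm_comb a (inr (p, q)) c * F c) = - a q * F p + a p * F q.
Proof.
move=> /is_posP /= -> /is_negP -> /=.
rewrite (@rsum_ext _ _ (fun t => (if t == p then - a q else 0) * F t +
  (if t == q then a p else 0) * F t)); last by move=> t; ring.
by rewrite rsum_add !rsum_delta_mul.
Qed.

Lemma pair_bounds_ordered ap aq rp rq : 0 < ap -> aq < 0 ->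
  aq * rp <= ap * rq -> rq / aq <= rp / ap.
Proof.
move=> Hp Hq H; apply: (Rmult_le_reg_r (ap * - aq)); first nra.
have -> : rq / aq * (ap * - aq) = - (ap * rq) by field; lra.
have -> : rp / ap * (ap * - aq) = - (aq * rp) by field; lra.
lra.
Qed.

(* Elimination step: a solution of the eliminated system extends to a
   solution of the original one, by choosing the eliminated unknown between
   the lower bounds (rows with [a c < 0]) and upper bounds ([a c > 0]). *)
Lemma fm_lift (V C : finType) (A : C -> V -> R) (b : C -> R) (v : V) (x' : V -> R) :
  let a := fun c => A c v in
  (forall c', dotv (fm_A a A c') x' <= fm_b a b c') -> feasible A b.
Proof.
move=> a Hx'.
pose r := fun c => b c - dotv (A c) x' + a c * x' v.
have Hpair : forall q p, is_neg (a q) -> is_pos (a p) -> r q / a q <= r p / a p.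
{ move=> q p /is_negP Hq /is_posP Hp.
  have := Hx' (inr (p, q)); rewrite /fm_A dotv_comb /fm_b !fm_pair_row // => H.
  apply: pair_bounds_ordered => //; rewrite /r; nra. }
have [t [Hlow Hup]] := separating_value Hpair.
exists (fun w => if w == v then t else x' w) => c; rewrite dotv_update.
suff : a c * t <= r c by rewrite /r /a; lra.
case: (Rtotal_order (a c) 0) => [Hn | [Hz | Hp]].
- have := Hlow c; move/is_negP: (Hn) => Hn' /(_ Hn') H.
  have -> : r c = r c / a c * a c by field; lra.
  nra.
- have := Hx' (inl c); rewrite /fm_A dotv_comb /fm_b !fm_zero_row //.
  by rewrite /r Hz; lra.
- have := Hup c; move/is_posP: (Hp) => Hp' /(_ Hp') H.
  have -> : r c = r c / a c * a c by field; lra.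
  nra.
Qed.

Lemma farkas_trivial (V C : finType) (A : C -> V -> R) b :
  (forall c w, A c w = 0) -> feasible A b \/ certificate A b.
Proof.
move=> H0; case: (classic (forall c, 0 <= b c)) => Hb.
- left; exists (fun _ => 0) => c.
  by rewrite /dotv rsum_zero // => w; rewrite H0; ring.
- right; have [c0 Hc0] := not_all_ex_not _ _ Hb.
  exists (fun c => if c == c0 then 1 else 0); split; [|split].
  + by move=> c; case: (c == c0); lra.
  + by move=> w; rewrite rsum_delta_mul H0; ring.
  + by rewrite rsum_delta_mul; lra.
Qed.

(* Farkas' lemma for systems whose unknowns lie in [vs], by induction on [vs]:
   eliminate one and pull a certificate of the smaller system back along
   the nonnegative multipliers [fm_comb]. *)
Lemma farkas_on (V : finType) (vs : list V) : forall (C : finType) (A : C -> V -> R) b,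
  (forall c w, ~ In w vs -> A c w = 0) -> feasible A b \/ certificate A b.
Proof.
elim: vs => [|v vs IH] C A b HA.
  by apply: farkas_trivial => c w; apply: HA.
pose a := fun c => A c v.
have HA' : forall c' w, ~ In w vs -> fm_A a A c' w = 0.
{ move=> c' w Hw; case: (w =P v) => [-> | Hne]; first exact: fm_comb_kills.
  rewrite /fm_A rsum_zero // => c; rewrite HA; first ring.
  by case=> [E|]; [apply: Hne | apply: Hw]. }
case: (IH _ (fm_A a A) (fm_b a b) HA') => [[x' Hx'] | [y' [Hy1 [Hy2 Hy3]]]].
  by left; exact: fm_lift Hx'.
right; exists (fun c => rsum (fun c' => y' c' * fm_comb a c' c)).
have comb_swap G : rsum (fun c => rsum (fun c' => y' c' * fm_comb a c' c) * G c) =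
    rsum (fun c' => y' c' * rsum (fun c => fm_comb a c' c * G c)).
  exact: dotv_comb.
split; [|split].
- move=> c; apply: rsum_nonneg => c'.
  by apply: Rmult_le_pos; [apply: Hy1 | apply: fm_comb_nonneg].
- by move=> w; rewrite comb_swap; apply: Hy2.
- by rewrite comb_swap; apply: Hy3.
Qed.

Lemma mem_In (T : eqType) (x : T) (s : seq T) : x \in s -> In x s.
Proof.
elim: s => [|a s IH] //=; rewrite in_cons => /orP [/eqP -> | H]; [left | right]; auto.
Qed.

Lemma In_enum (T : finType) (t : T) : In t (enum T).
Proof. by apply: mem_In; rewrite mem_enum. Qed.

Lemma farkas (V C : finType) (A : C -> V -> R) (b : C -> R) :
  feasible A b \/ certificate A b.
Proof. by apply: (@farkas_on V (enum V)) => c w H; case: H; apply: In_enum. Qed.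

(** * Finitely supported laws and their integrals *)

Lemma support_list (K : finType) (u : Pt K -> R) : is_fsprob u ->
  exists l, NoDup l /\ (forall x, u x <> 0 <-> In x l) /\ lsum u l = 1.
Proof.
move=> [_ [_ [l [Nl [Cl Sl]]]]]; exists (List.filter (nonzerob u) l); split; [|split].
- exact: NoDup_filter.
- by move=> x; rewrite filter_In nonzerobP; split=> [H|[]]; auto.
- by rewrite -lsum_filter.
Qed.

Lemma fsupp_spec (K : finType) (u : Pt K -> R) : is_fsprob u ->
  NoDup (fsupp u) /\ (forall x, u x <> 0 -> In x (fsupp u)).
Proof.
move=> [_ [_ [l [Nl [Cl _]]]]]; rewrite /fsupp.
apply: (epsilon_spec (inhabits nil) (fun l => NoDup l /\ forall x, u x <> 0 -> In x l)).
by exists l.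
Qed.

Lemma integ_list (K : finType) (u f : Pt K -> R) l : is_fsprob u -> NoDup l ->
  (forall x, u x <> 0 -> In x l) -> integ u f = lsum (fun x => u x * f x) l.
Proof.
move=> Hu Nl Cl; have [N C] := fsupp_spec Hu; rewrite /integ.
by apply: lsum_indep => // x H; [apply: C | apply: Cl] => E; apply: H; rewrite E; ring.
Qed.

(** * The posterior map *)

Section Posterior.
Variables (K S : finType) (pi : K * S -> R).
Hypothesis pi_law : inDelta pi.

Lemma marg_nonneg s : 0 <= marg pi s.
Proof. by apply: rsum_nonneg => k; apply: (proj1 pi_law). Qed.

Lemma pi_le_marg k s : pi (k, s) <= marg pi s.
Proof. by apply: (@rsum_ge_term K (fun k => pi (k, s))) => t; apply: (proj1 pi_law). Qed.

Lemma sum_marg : rsum (marg pi) = 1.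
Proof. by rewrite /marg -rsum_swap -rsum_pair (proj2 pi_law). Qed.

Lemma post_inX s : marg pi s <> 0 -> inX (post pi s).
Proof.
move=> Hm; have := marg_nonneg s; split=> [k|].
- apply: Rmult_le_pos; first exact: (proj1 pi_law).
  by apply/Rlt_le/Rinv_0_lt_compat; lra.
- rewrite /post /Rdiv (@rsum_ext _ _ (fun k => / marg pi s * pi (k, s))).
    by rewrite rsum_scal /marg in Hm *; field.
  by move=> k; ring.
Qed.

Lemma psi_support x : psi pi x <> 0 -> exists s, post pi s = x /\ marg pi s <> 0.
Proof.
move=> H; apply: NNPP => H2; apply: H; rewrite /psi rsum_zero // => s.
case: excluded_middle_informative => E //=.
by apply: NNPP => H3; apply: H2; exists s.
Qed.

Lemma psi_ge_marg s : marg pi s <= psi pi (post pi s).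
Proof.
pose F s0 := if excluded_middle_informative (post pi s0 = post pi s)
             then marg pi s0 else 0.
have : F s <= rsum F.
  apply: rsum_ge_term => t; rewrite /F.
  by case: excluded_middle_informative => H /=; [apply: marg_nonneg | lra].
by rewrite /F; case: excluded_middle_informative.
Qed.

Lemma lsum_psi (f : Pt K -> R) l : NoDup l -> (forall x, psi pi x <> 0 -> In x l) ->
  lsum (fun x => psi pi x * f x) l = rsum (fun s => marg pi s * f (post pi s)).
Proof.
move=> Nl Cl.
rewrite (@lsum_ext _ _ (fun x => rsum (fun s => if excluded_middle_informative
  (post pi s = x) then marg pi s * f (post pi s) else 0))); last first.
  move=> x; rewrite /psi Rmult_comm -rsum_scal; apply: rsum_ext => s.
  by case: excluded_middle_informative => [E|E] /=; [rewrite E|]; ring.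
rewrite lsum_rsum; apply: rsum_ext => s; rewrite lsum_indicator //.
case: excluded_middle_informative => Hn //=.
have : psi pi (post pi s) = 0 by apply: NNPP => H; apply: Hn; apply: Cl.
have := psi_ge_marg s; have := marg_nonneg s => H1 H2 H3.
have -> : marg pi s = 0 by lra.
ring.
Qed.

Lemma psi_fsprob : is_fsprob (psi pi).
Proof.
split; [|split].
- move=> x; apply: rsum_nonneg => s.
  by case: excluded_middle_informative => H /=; [apply: marg_nonneg | lra].
- by move=> x /psi_support [s [<- Hm]]; apply: post_inX.
- pose dec (x y : Pt K) : {x = y} + {x <> y} :=
    match excluded_middle_informative (x = y) with
    | left e => left e | right n => right n end.
  pose l := nodup dec (map (post pi) (enum S)).
  have Cl : forall x, psi pi x <> 0 -> In x l.
    by move=> x /psi_support [s [<- _]]; apply/nodup_In/in_map/In_enum.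
  exists l; split; [exact: NoDup_nodup | split=> //].
  rewrite (@lsum_ext _ _ (fun x => psi pi x * (fun _ => 1) x)); last by move=> x; ring.
  rewrite lsum_psi //; last exact: NoDup_nodup.
  by rewrite -[RHS]sum_marg; apply: rsum_ext => s; ring.
Qed.

Lemma integ_psi (f : Pt K -> R) :
  integ (psi pi) f = rsum (fun s => marg pi s * f (post pi s)).
Proof. by have [N C] := fsupp_spec psi_fsprob; apply: lsum_psi. Qed.

End Posterior.

(** * The class [D1] and the distance [d_*] *)

Lemma l1_scaled (K : finType) (x : Pt K) (a : R) : inX x -> 0 <= a ->
  l1 (fun k => a * x k) = a.
Proof.
move=> [H1 H2] Ha; rewrite /l1 (@rsum_ext _ _ (fun k => a * x k)).
  by rewrite rsum_scal H2 Rmult_1_r.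
by move=> k; rewrite Rabs_pos_eq //; apply: Rmult_le_pos.
Qed.

(* Functions of [D1] take values in [-1, 1] on [X] (take [a, b] = [0, 1]
   and [1, 0]). *)
Lemma D1_bound (K : finType) (f : Pt K -> R) x : D1 f -> inX x -> -1 <= f x <= 1.
Proof.
move=> [_ H] Hx; have E := l1_scaled Hx Rle_0_1.
have E1 : l1 (fun k => 0 * x k - 1 * x k) = 1.
  by rewrite -[RHS]E; apply: rsum_ext => k; rewrite -Rabs_Ropp; f_equal; ring.
have E2 : l1 (fun k => 1 * x k - 0 * x k) = 1.
  by rewrite -[RHS]E; apply: rsum_ext => k; f_equal; ring.
have := H x x Hx Hx 0 1 (Rle_refl 0) Rle_0_1.
have := H x x Hx Hx 1 0 Rle_0_1 (Rle_refl 0).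
rewrite E1 E2; lra.
Qed.

Lemma D1_zero (K : finType) : D1 (fun _ : Pt K => 0).
Proof.
split=> [x _ eps He | x y _ _ a b _ _].
- by exists eps; split=> // y _ _; rewrite Rminus_0_r Rabs_R0.
- have := rsum_nonneg (fun k => Rabs_pos (a * x k - b * y k)); rewrite /l1; lra.
Qed.

Lemma integ_D1_bound (K : finType) (u f : Pt K -> R) : is_fsprob u -> D1 f ->
  - lsum u (fsupp u) <= integ u f <= lsum u (fsupp u).
Proof.
move=> [Hp [HX _]] Hf; split; rewrite /integ; last first.
  apply: lsum_le => x; case: (Req_dec (u x) 0) => [-> | H]; first lra.
  by have := D1_bound Hf (HX x H); have := Hp x; nra.
rewrite -lsum_opp; apply: lsum_le => x; case: (Req_dec (u x) 0) => [-> | H]; first lra.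
by have := D1_bound Hf (HX x H); have := Hp x; nra.
Qed.

Lemma dstar_spec (K : finType) (u v : Pt K -> R) : is_fsprob u -> is_fsprob v ->
  is_lub (dstar_set u v) (dstar u v).
Proof.
move=> Hu Hv; apply: (epsilon_spec (inhabits 0) (fun r => is_lub (dstar_set u v) r)).
have Hbound : bound (dstar_set u v).
  exists (lsum u (fsupp u) + lsum v (fsupp v)) => r [f [Hf ->]].
  have := integ_D1_bound Hu Hf; have := integ_D1_bound Hv Hf.
  lra.
have Hne : exists r, dstar_set u v r.
  by exists (integ u (fun _ => 0) - integ v (fun _ => 0)), (fun _ => 0);
     split; first exact: D1_zero.
by have [m Hm] := completeness _ Hbound Hne; exists m.
Qed.

Lemma dstar_le (K : finType) (u v : Pt K -> R) M : is_fsprob u -> is_fsprob v ->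
  (forall f, D1 f -> integ u f - integ v f <= M) -> dstar u v <= M.
Proof.
move=> Hu Hv H; apply: (proj2 (dstar_spec Hu Hv)) => r [f [Hf ->]]; exact: H.
Qed.

Lemma dstar_ge (K : finType) (u v : Pt K -> R) f : is_fsprob u -> is_fsprob v ->
  D1 f -> integ u f - integ v f <= dstar u v.
Proof. by move=> Hu Hv Hf; apply: (proj1 (dstar_spec Hu Hv)); exists f. Qed.

(** * Part 1: the posterior map is 1-Lipschitz *)

Definition vertex (K : finType) (k0 : K) : Pt K := fun k => if k == k0 then 1 else 0.

Lemma vertex_inX (K : finType) (k0 : K) : inX (vertex k0).
Proof.
split=> [k|]; first by rewrite /vertex; case: (k == k0); lra.
exact: (rsum_delta k0 (fun _ => 1)).
Qed.

(* The posterior, replaced by a fixed vertex on null signals so that it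
   always lies in [X]; then [pi(k, s) = pi(s) p^k(s)] holds for every [s]. *)
Definition post_in_X (K S : finType) (k0 : K) (pi : K * S -> R) s : Pt K :=
  if excluded_middle_informative (marg pi s = 0) then vertex k0 else post pi s.

Section PosteriorInX.
Variables (K S : finType) (k0 : K) (pi : K * S -> R).
Hypothesis pi_law : inDelta pi.

Lemma post_in_X_inX s : inX (post_in_X k0 pi s).
Proof.
rewrite /post_in_X; case: excluded_middle_informative => H /=.
  exact: vertex_inX.
exact: post_inX.
Qed.

Lemma pi_factor s k : pi (k, s) = marg pi s * post_in_X k0 pi s k.
Proof.
rewrite /post_in_X; case: excluded_middle_informative => H /=.
  by rewrite H; have := pi_le_marg pi_law k s; have := proj1 pi_law (k, s); lra.
by rewrite /post; field.
Qed.

Lemma integ_psi_in_X (f : Pt K -> R) :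
  integ (psi pi) f = rsum (fun s => marg pi s * f (post_in_X k0 pi s)).
Proof.
rewrite integ_psi //; apply: rsum_ext => s; rewrite /post_in_X.
by case: excluded_middle_informative => H //=; rewrite H; ring.
Qed.

End PosteriorInX.

(* Signal by signal, the [D1] inequality with [a = pi(s)], [b = pi'(s)],
   [x = p(s)], [y = p'(s)] bounds [u(f) - v(f)] by [||pi - pi'||_1]. *)
Lemma psi_lipschitz (K S : finType) (pi pi' : K * S -> R) :
  (0 < #|K|)%N -> inDelta pi -> inDelta pi' ->
  dstar (psi pi) (psi pi') <= l1 (fun t => pi t - pi' t).
Proof.
move=> /card_gt0P [k0 _] Hd Hd'.
apply: dstar_le; try exact: psi_fsprob.
move=> f [_ Hf]; rewrite !(integ_psi_in_X k0) // /l1 rsum_pair rsum_swap rsum_sub.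
apply: rsum_le => s.
have := Hf _ _ (post_in_X_inX k0 Hd s) (post_in_X_inX k0 Hd' s) _ _
  (marg_nonneg Hd s) (marg_nonneg Hd' s).
by rewrite /l1 (@rsum_ext _ _ (fun k => Rabs (pi (k, s) - pi' (k, s)))) //
  => k; rewrite -!pi_factor.
Qed.

(** * A family of test functions in [D1] *)

(* The defining inequality of [D1]; continuity is a consequence of it. *)
Definition D1_ineq (K : finType) (g : Pt K -> R) : Prop :=
  forall x y, inX x -> inX y -> forall a b, 0 <= a -> 0 <= b ->
    a * g x - b * g y <= l1 (fun k => a * x k - b * y k).

Lemma D1_ineq_D1 (K : finType) (g : Pt K -> R) : D1_ineq g -> D1 g.
Proof.
move=> H; split=> // x Hx eps He; exists eps; split=> // y Hy Hd.
have E : l1 (fun k => 1 * x k - 1 * y k) = l1 (fun k => x k - y k).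
  by apply: rsum_ext => k; f_equal; ring.
have E' : l1 (fun k => 1 * y k - 1 * x k) = l1 (fun k => x k - y k).
  by apply: rsum_ext => k; rewrite -Rabs_Ropp; f_equal; ring.
have := H x y Hx Hy 1 1 Rle_0_1 Rle_0_1; have := H y x Hy Hx 1 1 Rle_0_1 Rle_0_1.
by rewrite E E' => H1 H2; apply: Rabs_def1; lra.
Qed.

Lemma D1_ineq_linear (K : finType) (c : K -> R) :
  (forall k, Rabs (c k) <= 1) -> D1_ineq (fun z => rsum (fun k => c k * z k)).
Proof.
move=> Hc x y Hx Hy a b Ha Hb; rewrite -!rsum_scal rsum_sub /l1.
apply: rsum_le => k.
have -> : a * (c k * x k) - b * (c k * y k) = c k * (a * x k - b * y k) by ring.
apply: Rle_trans (Rle_abs _) _; rewrite Rabs_mult.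
have := Hc k; have := Rabs_pos (a * x k - b * y k); have := Rabs_pos (c k); nra.
Qed.

(* Constants in [-1, 1]: on [X], [sum_k (a x_k - b y_k) = a - b]. *)
Lemma D1_ineq_const (K : finType) (r : R) : -1 <= r <= 1 -> D1_ineq (fun _ : Pt K => r).
Proof.
move=> Hr x y [_ Hx] [_ Hy] a b Ha Hb; apply: Rle_trans (rsum_abs _).
rewrite -rsum_sub !rsum_scal Hx Hy.
have -> : a * r - b * r = r * (a * 1 - b * 1) by ring.
apply: Rle_trans (Rle_abs _) _; rewrite Rabs_mult.
have := Rabs_pos (a * 1 - b * 1); have : Rabs r <= 1 by apply: Rabs_le; lra.
nra.
Qed.

Lemma D1_ineq_max (K : finType) (g h : Pt K -> R) :
  D1_ineq g -> D1_ineq h -> D1_ineq (fun z => Rmax (g z) (h z)).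
Proof.
move=> Hg Hh x y Hx Hy a b Ha Hb.
have := Hg x y Hx Hy a b Ha Hb; have := Hh x y Hx Hy a b Ha Hb.
have : b * g y <= b * Rmax (g y) (h y) by apply/Rmult_le_compat_l/Rmax_l.
have : b * h y <= b * Rmax (g y) (h y) by apply/Rmult_le_compat_l/Rmax_r.
move=> H1 H2 H3 H4; case: (Rle_dec (h x) (g x)) => Hxx.
- by rewrite (Rmax_left (g x)) //; lra.
- by rewrite (Rmax_right (g x)); lra.
Qed.

Lemma D1_ineq_min (K : finType) (g h : Pt K -> R) :
  D1_ineq g -> D1_ineq h -> D1_ineq (fun z => Rmin (g z) (h z)).
Proof.
move=> Hg Hh x y Hx Hy a b Ha Hb.
have := Hg x y Hx Hy a b Ha Hb; have := Hh x y Hx Hy a b Ha Hb.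
have : a * Rmin (g x) (h x) <= a * g x by apply/Rmult_le_compat_l/Rmin_l.
have : a * Rmin (g x) (h x) <= a * h x by apply/Rmult_le_compat_l/Rmin_r.
move=> H1 H2 H3 H4; case: (Rle_dec (g y) (h y)) => Hyy.
- by rewrite (Rmin_left (g y)) //; lra.
- by rewrite (Rmin_right (g y)); lra.
Qed.

Definition fmax (K : finType) (g h : Pt K -> R) : Pt K -> R := fun z => Rmax (g z) (h z).
Definition fmin (K : finType) (g h : Pt K -> R) : Pt K -> R := fun z => Rmin (g z) (h z).

(* The max-min [max_i min_j <c_ij, z>] of linear forms with coefficients in
   [-1, 1]: it lies in [D1], and it is the test function produced from a
   Farkas certificate. *)
Section MaxMin.
Variables (K I J : finType) (c : I -> J -> K -> R).
Hypothesis c_bound : forall i j k, Rabs (c i j k) <= 1.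

Definition linf i j : Pt K -> R := fun z => rsum (fun k => c i j k * z k).
Definition maxmin : Pt K -> R :=
  \big[@fmax K/(fun _ => -1)]_i \big[@fmin K/(fun _ => 1)]_j linf i j.

Lemma maxmin_D1 : D1 maxmin.
Proof.
apply/D1_ineq_D1/(big_ind (@D1_ineq K)) => [|g h|i _].
- by apply: D1_ineq_const; lra.
- exact: D1_ineq_max.
- apply: (big_ind (@D1_ineq K)) => [|g h|j _].
  + by apply: D1_ineq_const; lra.
  + exact: D1_ineq_min.
  + exact: D1_ineq_linear.
Qed.

Lemma maxmin_eval z : maxmin z = \big[Rmax/-1]_i \big[Rmin/1]_j linf i j z.
Proof.
rewrite /maxmin (big_morph (fun g : Pt K -> R => g z) (id1 := -1) (op1 := Rmax)) //.
by apply: eq_bigr => i _; rewrite (big_morph (fun g : Pt K -> R => g z) (id1 := 1) (op1 := Rmin)).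
Qed.

Lemma linf_bound i j z : inX z -> -1 <= linf i j z <= 1.
Proof.
move=> [Hp Hs]; have H := rsum_abs (fun k => c i j k * z k).
have : rsum (fun k => Rabs (c i j k * z k)) <= 1.
  rewrite -Hs; apply: rsum_le => k; rewrite Rabs_mult (Rabs_pos_eq (z k)) //.
  by have := c_bound i j k; have := Hp k; nra.
rewrite /linf; move: H; set s := rsum _.
have := Rle_abs s; have := Rle_abs (- s); rewrite Rabs_Ropp; lra.
Qed.

Lemma maxmin_lower z i m : m <= 1 -> (forall j, m <= linf i j z) -> m <= maxmin z.
Proof.
move=> H1 H2; rewrite maxmin_eval.
apply: Rle_trans (@bigmax_ge _ (index_enum I) xpredT _ (-1) i _ _) => //.
by apply: (big_ind (fun r => m <= r)) => // a b; apply: Rmin_glb.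
Qed.

Lemma maxmin_upper z j M : -1 <= M -> (forall i, linf i j z <= M) -> maxmin z <= M.
Proof.
move=> H1 H2; rewrite maxmin_eval.
apply: (big_ind (fun r => r <= M)) => // [a b|i _]; first exact: Rmax_lub.
apply: Rle_trans (H2 i); apply: bigmin_le => //; exact: mem_index_enum.
Qed.

End MaxMin.

(** * Joint laws built from a transport plan *)

Lemma nth_In' (A : Type) (x0 : A) (l : list A) i : (i < size l)%N -> In (nth x0 l i) l.
Proof. by elim: l i => [|a l IH] [|i] //= H; [left | right; apply: IH]. Qed.

Lemma In_nth_ex (A : Type) (x0 x : A) (l : list A) :
  In x l -> exists n, (n < size l)%N /\ nth x0 l n = x.
Proof.
elim: l => [|a l IH] //= [-> | /IH [n [H1 H2]]]; first by exists 0%N.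
by exists n.+1.
Qed.

Lemma NoDup_nth_inj (A : Type) (x0 : A) (l : list A) n1 n2 : NoDup l ->
  (n1 < size l)%N -> (n2 < size l)%N -> nth x0 l n1 = nth x0 l n2 -> n1 = n2.
Proof.
elim: l n1 n2 => [|a l IH] [|n1] [|n2] N H1 H2 E //=;
  inversion N as [|a0 l0 Ha Hl]; subst; rewrite /= in E.
- by case: Ha; rewrite E; apply: nth_In'.
- by case: Ha; rewrite -E; apply: nth_In'.
- by congr S; apply: IH.
Qed.

(* A law [w] with support enumerated by [l], and a nonnegative mass [a s] on
   each signal [s], assigned to the atom [l_(idx s)] so that the masses sent
   to each atom add up to its weight.  The joint law draws [s] with
   probability [a s] and then [k] according to the atom [l_(idx s)]; its
   posterior map gives back [w]. *)
Section BuiltLaw.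
Variables (K S : finType) (l : list (Pt K)) (w : Pt K -> R).
Variables (idx : S -> 'I_(size l)) (a : S -> R).
Hypothesis l_uniq : NoDup l.
Hypothesis l_support : forall x, w x <> 0 <-> In x l.
Hypothesis l_inX : forall i : 'I_(size l), inX (nth (fun _ => 0) l i).
Hypothesis w_mass : lsum w l = 1.
Hypothesis a_nonneg : forall s, 0 <= a s.
Hypothesis a_split : forall i,
  rsum (fun s => if idx s == i then a s else 0) = w (nth (fun _ => 0) l i).

Local Notation atom i := (nth (fun _ => 0) l i).
Definition built_law : K * S -> R := fun q => a q.2 * atom (idx q.2) q.1.

Lemma built_marg s : marg built_law s = a s.
Proof. by rewrite /marg /built_law /= rsum_scal (proj2 (l_inX _)) Rmult_1_r. Qed.

Lemma built_post s : a s <> 0 -> post built_law s = atom (idx s).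
Proof.
by move=> Ha; apply: functional_extensionality => k; rewrite /post built_marg /built_law /=; field.
Qed.

Lemma rsum_by_atom (F : 'I_(size l) -> R -> R) : (forall i, F i 0 = 0) ->
  rsum (fun s => F (idx s) (a s)) =
  rsum (fun i => rsum (fun s => F i (if idx s == i then a s else 0))).
Proof.
move=> F0; rewrite rsum_swap; apply: rsum_ext => s.
rewrite (rsum_single (idx s)) ?eqxx // => i /negbTE Hi.
by rewrite eq_sym Hi F0.
Qed.

Lemma built_inDelta : inDelta built_law.
Proof.
split=> [[k s]|].
  by apply: Rmult_le_pos => //; case: (l_inX (idx s)) => H _; apply: H.
rewrite rsum_pair rsum_swap (rsum_ext built_marg).
rewrite (@rsum_by_atom (fun _ r => r)) // (rsum_ext a_split) -w_mass.
by rewrite (lsum_ord (fun _ => 0)).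
Qed.

Lemma rsum_atom_indicator x : rsum (fun i : 'I_(size l) =>
  if excluded_middle_informative (atom i = x) then w (atom i) else 0) = w x.
Proof.
case: (classic (In x l)) => Hin.
- have [n [Hn Hnx]] := In_nth_ex (fun _ => 0) Hin.
  rewrite (rsum_single (Ordinal Hn)) => [|i Hi].
    by case: excluded_middle_informative => [E|E] /=; [rewrite E | case: E].
  case: excluded_middle_informative => //= e.
  case/negP: Hi; apply/eqP/val_inj => /=.
  by apply: (@NoDup_nth_inj _ (fun _ => 0) l) => //; rewrite e Hnx.
- have -> : w x = 0 by apply: NNPP => H; apply/Hin/l_support.
  apply: rsum_zero => i; case: excluded_middle_informative => //= e.
  by case: Hin; rewrite -e; apply: nth_In'.
Qed.

Lemma built_psi : psi built_law = w.
Proof.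
apply: functional_extensionality => x; rewrite /psi.
rewrite (@rsum_ext _ _ (fun s => if excluded_middle_informative (atom (idx s) = x)
  then a s else 0)); last first.
  move=> s; rewrite built_marg; case: (Req_dec (a s) 0) => Ha0; last by rewrite built_post.
  by rewrite Ha0; do 2 case: excluded_middle_informative.
rewrite (@rsum_by_atom (fun i r => if excluded_middle_informative (atom i = x)
  then r else 0)) => [|i]; last by case: excluded_middle_informative.
rewrite -[RHS]rsum_atom_indicator; apply: rsum_ext => i.
rewrite -a_split; case: excluded_middle_informative => //= _.
by apply: rsum_zero => s; case: (idx s == i).
Qed.

End BuiltLaw.

(** * The transport linear program *)

Definition sgn (b : bool) : R := if b then 1 else -1.

(* For laws [u], [v] whose supports are enumerated by [lu = (x_i)_i] and
   [lv = (y_j)_j], and a budget [cc], the system in the unknowns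
   [a_ij = mass_a i j], [b_ij = mass_b i j], [t_ijk = slack i j k]:
     [+-(a_ij x_i^k - b_ij y_j^k) <= t_ijk]      (rows [inl (((i,j),k),s)])
     [-a_ij <= 0], [-b_ij <= 0]                  (rows [inr (inl _)])
     [+-sum_j a_ij <= +-u(x_i)]                  (rows [inr (inr (inl _))])
     [+-sum_i b_ij <= +-v(y_j)]                  (rows [inr (inr (inr (inl _)))])
     [sum_ijk t_ijk <= cc]                       (row  [inr (inr (inr (inr tt)))]).
   The signs [+-] are indexed by a boolean through [sgn]. *)
Section TransportLP.
Variables (K : finType) (lu lv : list (Pt K)) (u v : Pt K -> R) (cc : R).

Local Notation I := (ordinal (size lu)).
Local Notation J := (ordinal (size lv)).
Definition xi (i : I) : Pt K := nth (fun _ => 0) lu i.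
Definition yj (j : J) : Pt K := nth (fun _ => 0) lv j.

Local Notation V := (((I * J) * bool) + ((I * J) * K))%type.
Local Notation C := ((((I * J) * K) * bool) +
  (((I * J) * bool) + ((I * bool) + ((J * bool) + unit))))%type.

Definition lp_coef (c : C) (w : V) : R :=
  match c with
  | inl (((i, j), k), s) => match w with
      | inl (p, ab) => if p == (i, j) then
          (if ab then sgn s * xi i k else - (sgn s * yj j k)) else 0
      | inr (p, k') => if (p == (i, j)) && (k' == k) then -1 else 0 end
  | inr (inl (p, ab)) => match w with
      | inl (p', ab') => if (p' == p) && (ab' == ab) then -1 else 0
      | inr _ => 0 end
  | inr (inr (inl (i, s))) => match w with
      | inl ((i', _), true) => if i' == i then sgn s else 0
      | _ => 0 end
  | inr (inr (inr (inl (j, s)))) => match w with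
      | inl ((_, j'), false) => if j' == j then sgn s else 0
      | _ => 0 end
  | inr (inr (inr (inr _))) => match w with inl _ => 0 | inr _ => 1 end
  end.

Definition lp_rhs (c : C) : R :=
  match c with
  | inl _ => 0
  | inr (inl _) => 0
  | inr (inr (inl (i, s))) => sgn s * u (xi i)
  | inr (inr (inr (inl (j, s)))) => sgn s * v (yj j)
  | inr (inr (inr (inr _))) => cc
  end.

Section Rows.
Variable x : V -> R.
Definition mass_a (i : I) (j : J) : R := x (inl ((i, j), true)).
Definition mass_b (i : I) (j : J) : R := x (inl ((i, j), false)).
Definition slack (i : I) (j : J) (k : K) : R := x (inr ((i, j), k)).

Lemma row_abs i j k s : dotv (lp_coef (inl (((i, j), k), s))) x =
  sgn s * (mass_a i j * xi i k - mass_b i j * yj j k) - slack i j k.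
Proof.
rewrite /dotv rsum_sum (@rsum_pair (I * J)%type bool) (@rsum_pair (I * J)%type K).
rewrite (rsum_single (i, j)) => [|p /negbTE Hp]; last first.
  by apply: rsum_zero => ab /=; rewrite Hp /=; ring.
rewrite (rsum_single (i, j)) => [|p /negbTE Hp]; last first.
  by apply: rsum_zero => k' /=; rewrite Hp /=; ring.
rewrite (rsum_single k) => [|k' /negbTE Hk]; last by rewrite /= Hk andbF; ring.
by rewrite rsum_bool /= !eqxx /= /mass_a /mass_b /slack; ring.
Qed.

Lemma row_pos p ab : dotv (lp_coef (inr (inl (p, ab)))) x = - x (inl (p, ab)).
Proof.
rewrite /dotv rsum_sum (@rsum_pair (I * J)%type bool).
rewrite (rsum_single p) => [|p' /negbTE Hp]; last first.
  by apply: rsum_zero => ab' /=; rewrite Hp /=; ring.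
rewrite (rsum_single ab) => [|ab' /negbTE Hab]; last by rewrite /= eqxx Hab /=; ring.
by rewrite [X in _ + X]rsum_zero => [|q] /=; rewrite ?eqxx /=; ring.
Qed.

Lemma row_margu i s : dotv (lp_coef (inr (inr (inl (i, s))))) x =
  sgn s * rsum (fun j => mass_a i j).
Proof.
rewrite /dotv rsum_sum [X in _ + X]rsum_zero => [|q]; last by rewrite /=; ring.
rewrite rsum_pair rsum_pair -rsum_scal Rplus_0_r.
rewrite (rsum_single i) => [|i' /negbTE Hi]; last first.
  by apply: rsum_zero => j; rewrite rsum_bool /= Hi /=; ring.
by apply: rsum_ext => j; rewrite rsum_bool /= eqxx /mass_a; ring.
Qed.

Lemma row_margv j s : dotv (lp_coef (inr (inr (inr (inl (j, s)))))) x =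
  sgn s * rsum (fun i => mass_b i j).
Proof.
rewrite /dotv rsum_sum [X in _ + X]rsum_zero => [|q]; last by rewrite /=; ring.
rewrite rsum_pair rsum_pair rsum_swap -rsum_scal Rplus_0_r.
rewrite (rsum_single j) => [|j' /negbTE Hj]; last first.
  by apply: rsum_zero => i; rewrite rsum_bool /= Hj /=; ring.
by apply: rsum_ext => i; rewrite rsum_bool /= eqxx /mass_b; ring.
Qed.

Lemma row_budget e : dotv (lp_coef (inr (inr (inr (inr e))))) x =
  rsum (fun q : (I * J) * K => x (inr q)).
Proof.
rewrite /dotv rsum_sum rsum_zero => [|q] /=; last ring.
by rewrite Rplus_0_l; apply: rsum_ext => q; ring.
Qed.

End Rows.

Section Columns.
Variable y : C -> R.
Definition y_abs (p : I * J) (k : K) (s : bool) : R := y (inl ((p, k), s)).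
Definition y_pos (p : I * J) (ab : bool) : R := y (inr (inl (p, ab))).
Definition y_mu (i : I) (s : bool) : R := y (inr (inr (inl (i, s)))).
Definition y_mv (j : J) (s : bool) : R := y (inr (inr (inr (inl (j, s))))).
Definition y_budget : R := y (inr (inr (inr (inr tt)))).

Definition y_diff (i : I) (j : J) (k : K) : R := y_abs (i, j) k true - y_abs (i, j) k false.
Definition y_mu_net (i : I) : R := y_mu i true - y_mu i false.
Definition y_mv_net (j : J) : R := y_mv j true - y_mv j false.

Lemma col_a i j : rsum (fun c => y c * lp_coef c (inl ((i, j), true))) =
  rsum (fun k => y_diff i j k * xi i k) - y_pos (i, j) true + y_mu_net i.
Proof.
rewrite !rsum_sum (@rsum_pair ((I * J) * K)%type bool) (@rsum_pair (I * J)%type K).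
rewrite (rsum_single (i, j)) => [|[i' j'] /negbTE Hp]; last first.
  by apply: rsum_zero => k; apply: rsum_zero => s /=; rewrite eq_sym Hp /=; ring.
rewrite (@rsum_pair (I * J)%type bool) (rsum_single (i, j)) => [|p /negbTE Hp]; last first.
  by apply: rsum_zero => ab /=; rewrite eq_sym Hp /=; ring.
rewrite (@rsum_pair I bool) (rsum_single i) => [|i' /negbTE Hi]; last first.
  by apply: rsum_zero => s /=; rewrite eq_sym Hi /=; ring.
rewrite [X in _ + (_ + (_ + (X + _)))]rsum_zero => [|[j' s]] /=; last ring.
rewrite rsum_unit !rsum_bool /= !eqxx /=.
have -> : rsum (fun k => rsum (fun s => y (inl ((i, j, k), s)) * (sgn s * xi i k))) =
          rsum (fun k => y_diff i j k * xi i k).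
  by apply: rsum_ext => k; rewrite rsum_bool /y_diff /y_abs /=; ring.
by rewrite /y_pos /y_mu_net /y_mu; ring.
Qed.

Lemma col_b i j : rsum (fun c => y c * lp_coef c (inl ((i, j), false))) =
  - rsum (fun k => y_diff i j k * yj j k) - y_pos (i, j) false + y_mv_net j.
Proof.
rewrite !rsum_sum (@rsum_pair ((I * J) * K)%type bool) (@rsum_pair (I * J)%type K).
rewrite (rsum_single (i, j)) => [|[i' j'] /negbTE Hp]; last first.
  by apply: rsum_zero => k; apply: rsum_zero => s /=; rewrite eq_sym Hp /=; ring.
rewrite (@rsum_pair (I * J)%type bool) (rsum_single (i, j)) => [|p /negbTE Hp]; last first.
  by apply: rsum_zero => ab /=; rewrite eq_sym Hp /=; ring.
rewrite [X in _ + (_ + (X + _))]rsum_zero => [|[i' s]] /=; last ring.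
rewrite (@rsum_pair J bool) (rsum_single j) => [|j' /negbTE Hj]; last first.
  by apply: rsum_zero => s /=; rewrite eq_sym Hj /=; ring.
rewrite rsum_unit !rsum_bool /= !eqxx /=.
have -> : rsum (fun k => rsum (fun s => y (inl ((i, j, k), s)) * - (sgn s * yj j k))) =
          - rsum (fun k => y_diff i j k * yj j k).
  by rewrite -rsum_opp; apply: rsum_ext => k; rewrite rsum_bool /y_diff /y_abs /=; ring.
by rewrite /y_pos /y_mv_net /y_mv; ring.
Qed.

Lemma col_t i j k : rsum (fun c => y c * lp_coef c (inr ((i, j), k))) =
  - (y_abs (i, j) k true + y_abs (i, j) k false) + y_budget.
Proof.
rewrite !rsum_sum (@rsum_pair ((I * J) * K)%type bool) (@rsum_pair (I * J)%type K).
rewrite (rsum_single (i, j)) => [|[i' j'] /negbTE Hp]; last first.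
  by apply: rsum_zero => k'; apply: rsum_zero => s /=; rewrite eq_sym Hp /=; ring.
rewrite (rsum_single k) => [|k' /negbTE Hk]; last first.
  by apply: rsum_zero => s /=; rewrite eqxx eq_sym Hk /=; ring.
rewrite [X in _ + (X + _)]rsum_zero => [|[p ab]] /=; last ring.
rewrite [X in _ + (_ + (X + _))]rsum_zero => [|[i' s]] /=; last ring.
rewrite [X in _ + (_ + (_ + (X + _)))]rsum_zero => [|[j' s]] /=; last ring.
by rewrite rsum_unit !rsum_bool /= /y_abs /y_budget !eqxx /=; ring.
Qed.

Lemma row_comb_rhs : rsum (fun c => y c * lp_rhs c) =
  rsum (fun i => y_mu_net i * u (xi i)) + rsum (fun j => y_mv_net j * v (yj j)) +
  y_budget * cc.
Proof.
rewrite !rsum_sum [X in X + _]rsum_zero => [|[[p k] s]] /=; last ring.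
rewrite [X in _ + (X + _)]rsum_zero => [|[p ab]] /=; last ring.
rewrite (@rsum_pair I bool) (@rsum_pair J bool) rsum_unit /y_budget.
have -> : rsum (fun i => rsum (fun s => y (inr (inr (inl (i, s)))) * lp_rhs (inr (inr (inl (i, s)))))) =
          rsum (fun i => y_mu_net i * u (xi i)).
  by apply: rsum_ext => i; rewrite rsum_bool /= /y_mu_net /y_mu; ring.
have -> : rsum (fun j => rsum (fun s => y (inr (inr (inr (inl (j, s))))) *
            lp_rhs (inr (inr (inr (inl (j, s))))))) = rsum (fun j => y_mv_net j * v (yj j)).
  by apply: rsum_ext => j; rewrite rsum_bool /= /y_mv_net /y_mv; ring.
by rewrite /=; ring.
Qed.

End Columns.
End TransportLP.

(** * Part 2: solving the transport program or building a test function *)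

Section Duality.
Variables (K : finType) (u v : Pt K -> R) (lu lv : list (Pt K)).
Hypothesis u_law : is_fsprob u.
Hypothesis v_law : is_fsprob v.
Hypothesis lu_uniq : NoDup lu.
Hypothesis lu_support : forall x, u x <> 0 <-> In x lu.
Hypothesis lu_mass : lsum u lu = 1.
Hypothesis lv_uniq : NoDup lv.
Hypothesis lv_support : forall x, v x <> 0 <-> In x lv.
Hypothesis lv_mass : lsum v lv = 1.
Variable cc : R.

Local Notation I := (ordinal (size lu)).
Local Notation J := (ordinal (size lv)).
Local Notation x_ i := (@xi K lu i).
Local Notation y_ j := (@yj K lv j).

Lemma xi_inX (i : I) : inX (x_ i).
Proof. by apply: (proj1 (proj2 u_law)); apply/lu_support/nth_In'. Qed.

Lemma yj_inX (j : J) : inX (y_ j).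
Proof. by apply: (proj1 (proj2 v_law)); apply/lv_support/nth_In'. Qed.

Lemma integ_u (f : Pt K -> R) : integ u f = rsum (fun i : I => u (x_ i) * f (x_ i)).
Proof.
by rewrite (integ_list _ u_law lu_uniq) ?(lsum_ord (fun _ => 0)) // => x /lu_support.
Qed.

Lemma integ_v (f : Pt K -> R) : integ v f = rsum (fun j : J => v (y_ j) * f (y_ j)).
Proof.
by rewrite (integ_list _ v_law lv_uniq) ?(lsum_ord (fun _ => 0)) // => x /lv_support.
Qed.

Lemma some_i : exists i : I, True.
Proof.
have H : (0 < size lu)%N by move: lu_mass; case: lu => [|a l] //= ?; lra.
by exists (Ordinal H).
Qed.

Lemma some_j : exists j : J, True.
Proof.
have H : (0 < size lv)%N by move: lv_mass; case: lv => [|a l] //= ?; lra.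
by exists (Ordinal H).
Qed.

Section Feasible.
Variable x : (((I * J) * bool) + ((I * J) * K))%type -> R.
Hypothesis x_sol : forall c, dotv (@lp_coef K lu lv c) x <= @lp_rhs K lu lv u v cc c.

Local Notation a := (mass_a x).
Local Notation b := (mass_b x).
Local Notation t := (slack x).

Lemma mass_a_nonneg i j : 0 <= a i j.
Proof. by have := x_sol (inr (inl ((i, j), true))); rewrite row_pos /mass_a /mass_b /=; lra. Qed.

Lemma mass_b_nonneg i j : 0 <= b i j.
Proof. by have := x_sol (inr (inl ((i, j), false))); rewrite row_pos /mass_a /mass_b /=; lra. Qed.

Lemma mass_a_split i : rsum (fun s : I * J => if s.1 == i then a s.1 s.2 else 0) = u (x_ i).
Proof.
rewrite rsum_pair (rsum_single i) /= => [|i' /negbTE Hi]; last first.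
  by apply: rsum_zero => j /=; rewrite Hi.
have := x_sol (inr (inr (inl (i, true)))); have := x_sol (inr (inr (inl (i, false)))).
by rewrite !row_margu /= eqxx /=; lra.
Qed.

Lemma mass_b_split j : rsum (fun s : I * J => if s.2 == j then b s.1 s.2 else 0) = v (y_ j).
Proof.
rewrite rsum_pair rsum_swap (rsum_single j) /= => [|j' /negbTE Hj]; last first.
  by apply: rsum_zero => i /=; rewrite Hj.
have := x_sol (inr (inr (inr (inl (j, true))))); have := x_sol (inr (inr (inr (inl (j, false))))).
by rewrite !row_margv /= eqxx /=; lra.
Qed.

Lemma slack_bound i j k : Rabs (a i j * x_ i k - b i j * y_ j k) <= t i j k.
Proof.
have := x_sol (inl (((i, j), k), true)); have := x_sol (inl (((i, j), k), false)).
by rewrite !row_abs /=; move=> H1 H2; apply: Rabs_le; lra.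
Qed.

Lemma slack_budget : rsum (fun q : (I * J) * K => t q.1.1 q.1.2 q.2) <= cc.
Proof.
have := x_sol (inr (inr (inr (inr tt)))); rewrite row_budget /=.
by apply: Rle_trans; apply/Req_le/rsum_ext => -[[i j] k].
Qed.

Lemma feasible_plans : exists (S : finType) (pi pi' : K * S -> R),
  inDelta pi /\ inDelta pi' /\ psi pi = u /\ psi pi' = v /\
  l1 (fun t => pi t - pi' t) <= cc.
Proof.
have Ha s := mass_a_nonneg s.1 s.2; have Hb s := mass_b_nonneg s.1 s.2.
exists (I * J)%type.
exists (@built_law K _ lu (fun s : I * J => s.1) (fun s => a s.1 s.2)).
exists (@built_law K _ lv (fun s : I * J => s.2) (fun s => b s.1 s.2)).
split; [|split; [|split; [|split]]].
- exact: built_inDelta xi_inX lu_mass Ha mass_a_split.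
- exact: built_inDelta yj_inX lv_mass Hb mass_b_split.
- exact: built_psi lu_uniq lu_support xi_inX mass_a_split.
- exact: built_psi lv_uniq lv_support yj_inX mass_b_split.
- apply: Rle_trans slack_budget.
  rewrite /l1 rsum_pair rsum_swap [X in _ <= X]rsum_pair.
  apply: rsum_le => -[i j]; apply: rsum_le => k; exact: slack_bound.
Qed.

End Feasible.

(* A Farkas certificate of infeasibility yields a test function [f] in [D1]
   with [u(f) - v(f) > cc]: after normalising by the multiplier [T] of the
   budget row, the net multipliers [D_ijk] of the rows [|a x - b y| <= t]
   are the coefficients of a max-min of linear forms. *)
Section Certificate.
Variable y : ((((I * J) * K) * bool) +
  (((I * J) * bool) + ((I * bool) + ((J * bool) + unit))))%type -> R.
Hypothesis y_nonneg : forall c, 0 <= y c.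
Hypothesis y_cols : forall w, rsum (fun c => y c * @lp_coef K lu lv c w) = 0.
Hypothesis y_rhs : rsum (fun c => y c * @lp_rhs K lu lv u v cc c) < 0.

Local Notation D := (y_diff y).
Local Notation T := (y_budget y).

Lemma y_pos_nonneg p ab : 0 <= y_pos y p ab.
Proof. exact: y_nonneg. Qed.

Lemma cert_a i j : rsum (fun k => D i j k * x_ i k) = y_pos y (i, j) true - y_mu_net y i.
Proof. by have := col_a y i j; rewrite y_cols; lra. Qed.

Lemma cert_b i j : rsum (fun k => D i j k * y_ j k) = y_mv_net y j - y_pos y (i, j) false.
Proof. by have := col_b y i j; rewrite y_cols; lra. Qed.

Lemma cert_a_lower i j : - y_mu_net y i <= rsum (fun k => D i j k * x_ i k).
Proof. by rewrite cert_a; have := y_pos_nonneg (i, j) true; lra. Qed.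

Lemma cert_b_upper i j : rsum (fun k => D i j k * y_ j k) <= y_mv_net y j.
Proof. by rewrite cert_b; have := y_pos_nonneg (i, j) false; lra. Qed.

Lemma cert_diff_bound i j k : Rabs (D i j k) <= T.
Proof.
have := col_t y i j k; rewrite y_cols => Ht.
have := y_nonneg (inl (((i, j), k), true)); have := y_nonneg (inl (((i, j), k), false)).
by rewrite /y_diff /y_abs in Ht *; move=> *; apply: Rabs_le; lra.
Qed.

(* The budget row must be used: without it the certificate would only
   combine the marginal constraints, whose right-hand sides are nonnegative
   on the supports of [u] and [v]. *)
Lemma cert_budget_pos : 0 < T.
Proof.
have HT : 0 <= T by apply: y_nonneg.
case: (Req_dec T 0) => [HT0|]; last lra.
have HD i j k : D i j k = 0.
  have := cert_diff_bound i j k; rewrite HT0 => H.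
  by apply: NNPP => /Rabs_no_R0; have := Rabs_pos (D i j k); lra.
have [i0 _] := some_i; have [j0 _] := some_j.
have Hmu i : 0 <= y_mu_net y i.
  have := cert_a i j0; rewrite rsum_zero => [|k]; last by rewrite HD; ring.
  by have := y_pos_nonneg (i, j0) true; lra.
have Hmv j : 0 <= y_mv_net y j.
  have := cert_b i0 j; rewrite rsum_zero => [|k]; last by rewrite HD; ring.
  by have := y_pos_nonneg (i0, j) false; lra.
have := y_rhs; rewrite row_comb_rhs HT0.
have := rsum_nonneg (fun i => Rmult_le_pos _ _ (Hmu i) (proj1 u_law (x_ i))).
have := rsum_nonneg (fun j => Rmult_le_pos _ _ (Hmv j) (proj1 v_law (y_ j))).
lra.
Qed.

Local Notation coef i j k := (D i j k / T).

Lemma cert_coef_bound i j k : Rabs (coef i j k) <= 1.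
Proof.
have HT := cert_budget_pos; rewrite Rabs_mult Rabs_inv (Rabs_pos_eq T); last lra.
apply: (Rmult_le_reg_r T) => //; rewrite Rmult_assoc Rinv_l; last lra.
by have := cert_diff_bound i j k; lra.
Qed.

Lemma linf_coef i j z : linf (fun i j k => coef i j k) i j z = rsum (fun k => D i j k * z k) / T.
Proof.
by rewrite /linf /Rdiv Rmult_comm -rsum_scal; apply: rsum_ext => k; ring.
Qed.

Lemma test_lower i : - y_mu_net y i / T <= maxmin (fun i j k => coef i j k) (x_ i).
Proof.
have HT := cert_budget_pos; have [j0 _] := some_j.
have Hj j : - y_mu_net y i / T <= linf (fun i j k => coef i j k) i j (x_ i).
  rewrite linf_coef; apply: Rmult_le_compat_r; last exact: cert_a_lower.
  by apply/Rlt_le/Rinv_0_lt_compat.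
apply: maxmin_lower (Hj); apply: Rle_trans (Hj j0) _.
by case: (linf_bound cert_coef_bound i j0 (xi_inX i)).
Qed.

Lemma test_upper j : maxmin (fun i j k => coef i j k) (y_ j) <= y_mv_net y j / T.
Proof.
have HT := cert_budget_pos; have [i0 _] := some_i.
have Hi i : linf (fun i j k => coef i j k) i j (y_ j) <= y_mv_net y j / T.
  rewrite linf_coef; apply: Rmult_le_compat_r; last exact: cert_b_upper.
  by apply/Rlt_le/Rinv_0_lt_compat.
apply: maxmin_upper (Hi); apply: Rle_trans _ (Hi i0).
by case: (linf_bound cert_coef_bound i0 j (yj_inX j)).
Qed.

Lemma certificate_test : exists f, D1 f /\ cc < integ u f - integ v f.
Proof.
have HT := cert_budget_pos; exists (maxmin (fun i j k => coef i j k)).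
split; first exact: (maxmin_D1 cert_coef_bound).
rewrite integ_u integ_v.
have Hu : rsum (fun i => u (x_ i) * (- y_mu_net y i / T)) <=
          rsum (fun i => u (x_ i) * maxmin (fun i j k => coef i j k) (x_ i)).
  by apply: rsum_le => i; apply/Rmult_le_compat_l/test_lower/(proj1 u_law).
have Hv : rsum (fun j => v (y_ j) * maxmin (fun i j k => coef i j k) (y_ j)) <=
          rsum (fun j => v (y_ j) * (y_mv_net y j / T)).
  by apply: rsum_le => j; apply/Rmult_le_compat_l/test_upper/(proj1 v_law).
have Hcc : cc < - / T * rsum (fun i => y_mu_net y i * u (x_ i)) -
                / T * rsum (fun j => y_mv_net y j * v (y_ j)).
  have := y_rhs; rewrite row_comb_rhs => H.
  apply: (Rmult_lt_reg_l T) => //; field_simplify; lra.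
have E1 : rsum (fun i => u (x_ i) * (- y_mu_net y i / T)) =
          - / T * rsum (fun i => y_mu_net y i * u (x_ i)).
  by rewrite -rsum_scal; apply: rsum_ext => i; rewrite /Rdiv; ring.
have E2 : rsum (fun j => v (y_ j) * (y_mv_net y j / T)) =
          / T * rsum (fun j => y_mv_net y j * v (y_ j)).
  by rewrite -rsum_scal; apply: rsum_ext => j; rewrite /Rdiv; ring.
rewrite E1 in Hu; rewrite E2 in Hv; apply: Rlt_le_trans Hcc _.
by apply: Rplus_le_compat; [exact: Hu | apply: Ropp_le_contravar; exact: Hv].
Qed.

End Certificate.
End Duality.

(* Above [d_*(u, v)], every level is reached by a pair of joint laws: the
   transport program is feasible, since a certificate of infeasibility would
   produce a test function beating [d_*]. *)
Lemma plans_below (K : finType) (u v : Pt K -> R) (cc : R) :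
  is_fsprob u -> is_fsprob v -> dstar u v < cc ->
  exists (S : finType) (pi pi' : K * S -> R),
    inDelta pi /\ inDelta pi' /\ psi pi = u /\ psi pi' = v /\
    l1 (fun t => pi t - pi' t) <= cc.
Proof.
move=> Hu Hv Hlt.
have [lu [Nu [Cu Su]]] := support_list Hu; have [lv [Nv [Cv Sv]]] := support_list Hv.
case: (farkas (@lp_coef K lu lv) (@lp_rhs K lu lv u v cc)) =>
  [[x Hx] | [y [Hy1 [Hy2 Hy3]]]].
  exact: (feasible_plans Hu Hv Nu Cu Su Nv Cv Sv Hx).
have [f [Hf Hcc]] := certificate_test Hu Hv Nu Cu Su Nv Cv Sv Hy1 Hy2 Hy3.
by have := dstar_ge Hu Hv Hf; lra.
Qed.

Unset Implicit Arguments.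

Theorem proposition3 (K : finType) (hK : (0 < #|K|)%N) :
  (forall (S : finType) (pi pi' : K * S -> R),
     inDelta pi -> inDelta pi' ->
     is_fsprob (psi pi) /\ is_fsprob (psi pi') /\
     dstar (psi pi) (psi pi') <= l1 (fun t => pi t - pi' t))
  /\
  (forall u v : Pt K -> R, is_fsprob u -> is_fsprob v ->
     is_glb (fun r => exists (S : finType) (pi pi' : K * S -> R),
                inDelta pi /\ inDelta pi' /\ psi pi = u /\ psi pi' = v /\
                r = l1 (fun t => pi t - pi' t))
            (dstar u v)).
Proof.
split.
- move=> S pi pi' Hd Hd'.
  by split; [|split]; [exact: psi_fsprob | exact: psi_fsprob | exact: psi_lipschitz].
- move=> u v Hu Hv; split.
  + by move=> r [S [pi [pi' [Hd [Hd' [<- [<- ->]]]]]]]; exact: psi_lipschitz.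
  + move=> m Hm; apply: Rnot_lt_le => Hlt.
    have [S [pi [pi' [Hd [Hd' [Eu [Ev Hl]]]]]]] :=
      plans_below (cc := (dstar u v + m) / 2) Hu Hv ltac:(lra).
    have := Hm _ (ex_intro _ S (ex_intro _ pi (ex_intro _ pi'
      (conj Hd (conj Hd' (conj Eu (conj Ev erefl))))))).
    lra.
Qed.
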